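(* There is a constant $C>0$ such that for every $n\ge1$: $\mathrm{Sen}(\overline{\mathcal S})\lesssim C\cdot\mathrm{Sen}(\tilde{\mathcal N})$, i.e., for every integer $0\le K\le\lfloor n/2\rfloor$ there is a probability measure $\mu_K$ on $[0,1/2]$ such that, entrywise, $\mathrm{Sen}(\overline{\mathcal S})_K\le C\int\mathrm{Sen}(\tilde{\mathcal N})_P\,d\mu_K(P)$.
   Context: Let $\mathbb{I}^n=\{0,1\}^n$ with Hamming distance $d$; operators on $\mathbb{R}^{\mathbb{I}^n}$ are identified with matrices and $A\le B$ means $B-A$ has nonnegative entries. For $0\le k\le n$, $(S_kf)(x)=\binom nk^{-1}\sum_{y:\,d(x,y)=k}f(y)$. $\mathrm{Sen}(\overline{\mathcal S})_K=\frac1{K+1}\sum_{\ell=0}^KS_\ell$ for $0\le K\le\lfloor n/2\rfloor$. For $p\in[0,1/2]$, $\tilde N_p=\sum_{k=0}^n\binom nkp^k(1-p)^{n-k}S_k$, and $\mathrm{Sen}(\tilde{\mathcal N})_P=\frac1P\int_0^P\tilde N_p\,dp$ for $P\in(0,1/2]$, with $\mathrm{Sen}(\tilde{\mathcal N})_0$ the identity (limit from above). For families $\mathcal A,\mathcal B$ of nonnegative matrices, $\mathcal A\lesssim\mathcal B$ means every $A\in\mathcal A$ satisfies $A\le\int B\,d\mu_A(B)$ for some probability measure $\mu_A$ on $\mathcal B$. *)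

From HB Require Import structures.
From mathcomp Require Import all_boot all_order all_algebra.
From mathcomp Require Import all_classical all_reals all_analysis.
Unset Printing Implicit Defensive.
Import Order.TTheory GRing.Theory Num.Theory.
Import numFieldNormedType.Exports.
Local Open Scope ring_scope.
Local Open Scope classical_set_scope.

Definition cube (n : nat) := {ffun 'I_n -> bool}.

Definition hamming (n : nat) (x y : cube n) : nat := #|[set i | x i != y i]|.

(* Operators on R^{I^n} identified with their matrices: entry (x,y). *)
Definition op (R : realType) (n : nat) := cube n -> cube n -> R.

(* (S_k f)(x) = binom(n,k)^{-1} sum_{d(x,y)=k} f(y) : matrix entries. *)
Definition Sk (R : realType) (n k : nat) : op R n :=
  fun x y => if hamming n x y == k then ('C(n, k)%:R)^-1 else 0.

Definition SenS (R : realType) (n K : nat) : op R n :=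
  fun x y => (K.+1%:R)^-1 * \sum_(0 <= l < K.+1) Sk R n l x y.

Definition Ntilde (R : realType) (n : nat) (p : R) : op R n :=
  fun x y => \sum_(0 <= k < n.+1)
     'C(n, k)%:R * p ^+ k * (1 - p) ^+ (n - k) * Sk R n k x y.

Definition idop (R : realType) (n : nat) : op R n :=
  fun x y => if x == y then 1 else 0.

Definition SenN (R : realType) (n : nat) (P : R) : op R n :=
  fun x y => if P == 0 then idop R n x y
             else P^-1 * (\int[@lebesgue_measure R]_(p in `[0, P]) Ntilde R n p x y).

(* Take for mu_K the Dirac mass at P = min(4(K+1)/(n+1), 1/2); then C = 8 works.
   With d = d(x,y), Sen(S)_K(x,y) = [d <= K] / ((K+1) C(n,d)).  The Bernstein
   weight b_{n,d}(p) = C(n,d) p^d (1-p)^(n-d) is 1/(n+1) times the derivative of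
   the binomial tail sum_{j>d} b_{n+1,j}(p), which vanishes at 0, so
   Sen(N)_P(x,y) = Pr[Bin(n+1,P) > d] / (P (n+1) C(n,d)).
   For d <= K this tail is at least 1/2: when P (n+1) = 4(K+1) the weights
   b_{n+1,j}(P) at least double up to j = K+1, so the head sum_{j<=d} is
   dominated by b_{n+1,d+1}(P); otherwise P = 1/2 and 2K < n+1, and the symmetry
   of the binomial coefficients does it.  Since P (n+1) <= 4(K+1), this gives
   Sen(N)_P(x,y) >= 1 / (8 (K+1) C(n,d)). *)

From mathcomp Require Import all_boot all_order all_algebra.
From mathcomp Require Import all_classical all_reals all_analysis.
From mathcomp Require Import measurable_realfun ring lra.
Import Order.TTheory GRing.Theory Num.Theory.
Import numFieldNormedType.Exports.
(* [ring_scope] is opened last so that [p^`()] is the polynomial derivative. *)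
Local Open Scope classical_set_scope.
Local Open Scope ring_scope.

Set Implicit Arguments.
Unset Strict Implicit.

Section BinomialSums.
Local Open Scope nat_scope.

Lemma sum_bin_rev N d : d <= N ->
  \sum_(0 <= j < d.+1) 'C(N, N - j) = \sum_(N - d <= i < N.+1) 'C(N, i).
Proof.
elim: d => [|d IH] dN; first by rewrite big_nat1 subn0 big_nat1.
rewrite big_nat_recr //= IH ?(ltnW dN) // (@big_ltn _ _ _ (N - d.+1)) ?ltnS ?leq_subr //.
by rewrite -subSn // subSS addnC.
Qed.

Lemma sum_bin_head_le_tail N d : d.*2 < N ->
  \sum_(0 <= j < d.+1) 'C(N, j) <= \sum_(d.+1 <= j < N.+1) 'C(N, j).
Proof.
move=> dN; have dN' : d <= N by rewrite (leq_trans _ (ltnW dN)) // -addnn leq_addr.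
rewrite big_nat_cond (eq_bigr (fun j => 'C(N, N - j))); last first.
  by move=> j /andP[/andP[_ jd] _]; rewrite bin_sub // (leq_trans _ dN').
rewrite -big_nat_cond sum_bin_rev // (@big_cat_nat _ _ _ (N - d) d.+1) //=.
- exact: leq_addl.
- by rewrite ltn_subRL addnn.
- by rewrite ltnW // ltnS leq_subr.
Qed.

End BinomialSums.

Section Bernstein.
Variable R : realFieldType.

Definition bern (N j : nat) (p : R) : R :=
  'C(N, j)%:R * p ^+ j * (1 - p) ^+ (N - j).

Lemma bern_ge0 N j p : 0 <= p <= 1 -> 0 <= bern N j p.
Proof.
by case/andP=> p0 p1; rewrite !mulr_ge0 ?exprn_ge0 ?subr_ge0.
Qed.

Lemma sum_bern N p : \sum_(0 <= j < N.+1) bern N j p = 1.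
Proof.
rewrite big_mkord -[RHS](expr1n _ N) -[X in X ^+ N](subrK p) exprDn.
by apply: eq_bigr => i _; rewrite /bern -mulr_natl; ring.
Qed.

Lemma bern_tail_ge_half N d p : (d <= N)%N ->
  \sum_(0 <= j < d.+1) bern N j p <= \sum_(d.+1 <= j < N.+1) bern N j p ->
  2^-1 <= \sum_(d.+1 <= j < N.+1) bern N j p.
Proof.
move=> dN; have := sum_bern N p; rewrite (@big_cat_nat _ _ _ d.+1) //.
set head := \sum_(_ <= _ < _) _; set tail := \sum_(_ <= _ < _) _ => sum1 le_ht.
rewrite -[2^-1]mulr1 ler_pdivrMl //; move: sum1 => /= sum1; lra.
Qed.

Lemma bern_succ N j p : (j < N)%N ->
  bern N j.+1 p * (j.+1%:R * (1 - p)) = bern N j p * ((N - j)%:R * p).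
Proof.
move=> jN; have [m Nj] : exists m, (N - j = m.+1)%N.
  by exists (N - j).-1; rewrite prednK // subn_gt0.
have Nj1 : (N - j.+1 = m)%N by rewrite subnS Nj.
have := mul_bin_left N j; rewrite Nj => /(congr1 (fun k => k%:R : R)).
rewrite natrM => binS.
rewrite /bern Nj Nj1 !exprS.
transitivity (j.+1%:R * 'C(N, j.+1)%:R * (p * p ^+ j * ((1 - p) * (1 - p) ^+ m)) : R).
  by ring.
by rewrite binS; ring.
Qed.

Lemma bern_double N j p : 0 <= p < 1 -> (j < N)%N ->
  2 * j.+1%:R * (1 - p) <= (N - j)%:R * p -> 2 * bern N j p <= bern N j.+1 p.
Proof.
move=> /andP[p0 p1] jN le_ratio.
have q0 : 0 < j.+1%:R * (1 - p) by rewrite mulr_gt0 ?ltr0n ?subr_gt0.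
rewrite -(ler_pM2r q0) bern_succ //.
rewrite [leLHS](_ : _ = bern N j p * (2 * j.+1%:R * (1 - p))).
  by apply: ler_wpM2l le_ratio; rewrite bern_ge0 // p0 ltW.
by ring.
Qed.

Lemma bern_head_le_next N K p : 0 <= p <= 1 ->
  (forall j, (j <= K)%N -> 2 * bern N j p <= bern N j.+1 p) ->
  forall k, (k <= K)%N -> \sum_(0 <= j < k.+1) bern N j p <= bern N k.+1 p.
Proof.
move=> p01 dbl; elim=> [|k IH] kK.
  by rewrite big_nat1; have := dbl 0%N kK; have := bern_ge0 N 0 p01; lra.
by rewrite big_nat_recr //=; have := IH (ltnW kK); have := dbl k.+1 kK; lra.
Qed.

Lemma bern_doubling_ratio N K j (p : R) : 0 <= p -> p * N%:R = 4 * K.+1%:R ->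
  (j <= K)%N -> (j <= N)%N -> 2 * j.+1%:R * (1 - p) <= (N - j)%:R * p.
Proof.
move=> p0 pN jK jN; rewrite natrB // mulrBl [N%:R * p]mulrC pN.
have : j%:R <= K%:R :> R by rewrite ler_nat.
have : 0 <= j%:R * p by rewrite mulr_ge0 ?ler0n.
have : 0 <= K%:R :> R by [].
rewrite -(addn1 j) -(addn1 K) !natrD; nra.
Qed.

Lemma bern_head_le_tail N K d (p : R) : 0 <= p <= 1 -> (K < N)%N ->
  (forall j, (j <= K)%N -> 2 * bern N j p <= bern N j.+1 p) -> (d <= K)%N ->
  \sum_(0 <= j < d.+1) bern N j p <= \sum_(d.+1 <= j < N.+1) bern N j p.
Proof.
move=> p01 KN dbl dK; apply: le_trans (bern_head_le_next p01 dbl dK) _.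
rewrite big_ltn ?ltnS ?(leq_ltn_trans dK) // lerDl.
by rewrite big_nat_cond; apply: sumr_ge0 => j _; apply: bern_ge0.
Qed.

Lemma bern_half N j : bern N j (2^-1 : R) = 'C(N, j)%:R * 2^-1 ^+ N.
Proof.
rewrite /bern; have [jN|Nj] := leqP j N; last by rewrite bin_small // !mul0r.
have -> : 1 - 2^-1 = 2^-1 :> R by rewrite {1}(splitr 1) mul1r addrK.
by rewrite -mulrA -exprD subnKC.
Qed.

Lemma bern_half_head_le_tail N d : (d.*2 < N)%N ->
  \sum_(0 <= j < d.+1) bern N j (2^-1 : R) <= \sum_(d.+1 <= j < N.+1) bern N j 2^-1.
Proof.
move=> dN; rewrite !(eq_bigr _ (fun j _ => bern_half N j)) -!mulr_suml.
by rewrite ler_wpM2r ?exprn_ge0 // -!natr_sum ler_nat sum_bin_head_le_tail.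
Qed.

End Bernstein.

Section BernsteinPoly.
Variable R : realFieldType.

Definition bernp (n j : nat) : {poly R} :=
  'C(n, j)%:R *: ('X^j * (1 - 'X) ^+ (n - j)).

Lemma horner_bernp n j p : (bernp n j).[p] = bern n j p.
Proof. by rewrite /bernp /bern !hornerE. Qed.

Lemma deriv_bernpS n j :
  (bernp n.+1 j.+1)^`() = n.+1%:R *: (bernp n j - bernp n j.+1).
Proof.
have binS : 'C(n.+1, j.+1)%:R * j.+1%:R = n.+1%:R * 'C(n, j)%:R :> R.
  by rewrite -!natrM mulnC -mul_bin_diag.
have binD : 'C(n.+1, j.+1)%:R * (n - j)%:R = n.+1%:R * 'C(n, j.+1)%:R :> R.
  by rewrite -!natrM mulnC -subSS -mul_bin_down.
rewrite /bernp subSS derivZ derivM derivXn deriv_exp derivB derivX derivC.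
rewrite -subnS /= sub0r mulN1r mulrnAl mulrnAr mulrN.
set A := 'X^j * _; set B := 'X^(j.+1) * _.
rewrite mulNrn -[A *+ _]scaler_nat -[B *+ _]scaler_nat scalerDr scalerN !scalerA.
by rewrite binS binD scalerBr !scalerA.
Qed.

Definition bern_tailp (n d : nat) : {poly R} := \sum_(d.+1 <= j < n.+2) bernp n.+1 j.

Lemma horner_bern_tailp n d p :
  (bern_tailp n d).[p] = \sum_(d.+1 <= j < n.+2) bern n.+1 j p.
Proof. by rewrite horner_sum; apply: eq_bigr => j _; rewrite horner_bernp. Qed.

Lemma bern_tailp0 n d : (bern_tailp n d).[0] = 0.
Proof.
rewrite horner_bern_tailp big_nat_cond big1 // => j /andP[/andP[dj _] _].
by rewrite /bern expr0n gtn_eqF ?(leq_ltn_trans _ dj) // mulr0 mul0r.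
Qed.

Lemma deriv_bern_tailp n d : (d <= n)%N ->
  (bern_tailp n d)^`() = n.+1%:R *: bernp n d.
Proof.
move=> dn; rewrite /bern_tailp big_add1 /= raddf_sum.
rewrite (eq_bigr _ (fun j _ => deriv_bernpS n j)) -scaler_sumr.
have -> : \sum_(d <= j < n.+1) (bernp n j - bernp n j.+1) = bernp n d - bernp n n.+1.
  rewrite -[RHS]opprB -telescope_sumr ?leqW // -sumrN.
  by apply: eq_bigr => j _; rewrite opprB.
by rewrite {2}/bernp bin_small // mulr0n scale0r subr0.
Qed.

End BernsteinPoly.

Lemma Rintegral_deriv_poly (R : realType) (q : {poly R}) (a b : R) : a < b ->
  \int[lebesgue_measure]_(x in `[a, b]) (q^`()).[x] = q.[b] - q.[a].
Proof.
move=> ab; rewrite /Rintegral (@continuous_FTC2 _ _ (horner q)) // -?EFinB //.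
- by apply: continuous_subspaceT; exact: continuous_horner.
- split; first by move=> x _; exact: derivable_horner.
  + by apply: cvg_at_right_filter; exact: continuous_horner.
  + by apply: cvg_at_left_filter; exact: continuous_horner.
- by move=> x _; rewrite derivE.
Qed.

Section CubeOperators.
Variable (R : realType) (n : nat).
Implicit Types (x y : cube n) (K : nat) (P p : R).

Lemma hamming_le x y : (hamming n x y <= n)%N.
Proof. by rewrite /hamming (leq_trans (max_card _)) ?card_ord. Qed.

Lemma bin_hamming_neq0 x y : 'C(n, hamming n x y)%:R != 0 :> R.
Proof. by rewrite pnatr_eq0 -lt0n bin_gt0 hamming_le. Qed.

Lemma Ntilde_hamming x y p :
  Ntilde R n p x y = ('C(n, hamming n x y)%:R)^-1 * bern n (hamming n x y) p.
Proof.
rewrite /Ntilde /Sk (eq_bigr (fun k => if k == hamming n x y then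
    ('C(n, k)%:R)^-1 * bern n k p else 0)); last first.
  by move=> k _; rewrite eq_sym; case: eqP => [->|]; rewrite ?mulr0 // mulrC.
by rewrite -big_mkcond big_nat1_eq ltnS hamming_le.
Qed.

Lemma SenS_hamming K x y : SenS R n K x y =
  if (hamming n x y <= K)%N
  then (K.+1%:R)^-1 * ('C(n, hamming n x y)%:R)^-1 else 0.
Proof.
rewrite /SenS /Sk (eq_bigr (fun k => if k == hamming n x y then
    ('C(n, k)%:R)^-1 else 0)); last by move=> k _; rewrite eq_sym.
by rewrite -big_mkcond big_nat1_eq ltnS /=; case: ifP; rewrite ?mulr0.
Qed.

Lemma SenN_hamming P x y : 0 < P ->
  SenN R n P x y = (P * n.+1%:R * 'C(n, hamming n x y)%:R)^-1 *
                   \sum_((hamming n x y).+1 <= j < n.+2) bern n.+1 j P.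
Proof.
move=> P0; have Cd0 := bin_hamming_neq0 x y.
rewrite /SenN gt_eqF //; set d := hamming n x y in Cd0 *.
have -> : (fun p => Ntilde R n p x y) =
          horner (((n.+1%:R * 'C(n, d)%:R)^-1 *: bern_tailp R n d)^`()).
  apply/funext => p; rewrite Ntilde_hamming derivZ deriv_bern_tailp ?hamming_le //.
  rewrite scalerA hornerZ horner_bernp -/d; field.
  by rewrite Cd0 nat1r pnatr_eq0.
rewrite Rintegral_deriv_poly // !hornerZ bern_tailp0 mulr0 subr0.
by rewrite horner_bern_tailp mulrA -invfM mulrA.
Qed.

Lemma measurable_SenN x y (b : R) :
  measurable_fun `[0, b] (fun P => SenN R n P x y).
Proof.
have split0 : `[0, b] `<=` [set 0] `|` `]0, b].
  move=> z /=; rewrite !in_itv /= => /andP[z0 zb].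
  have [->|nz] := eqVneq z 0; [by left | right].
  by rewrite /= lt_neqAle eq_sym nz z0.
apply: (measurable_funS _ split0); first exact: measurableU.
apply/measurable_funU => //; split; first exact: measurable_fun_set1.
set q := (n.+1%:R * 'C(n, hamming n x y)%:R)^-1 *:
         bern_tailp R n (hamming n x y).
apply: (eq_measurable_fun (fun P : R => P^-1 * q.[P])).
  move=> P; rewrite inE /= in_itv /= => /andP[P0 _].
  by rewrite SenN_hamming // hornerZ horner_bern_tailp mulrA -invfM mulrA.
apply: subspace_continuous_measurable_fun => //.
apply: continuous_in_subspaceT => P; rewrite inE /= in_itv /= => /andP[P0 _].
apply: continuousM; last exact: continuous_horner.
by apply: continuousV; [rewrite gt_eqF | exact: cvg_id].
Qed.

End CubeOperators.

Section DiracPoint.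
Variables (R : realType) (n K : nat).

Definition Pstar : R :=
  if (8 * K.+1 <= n.+1)%N then 4 * K.+1%:R / n.+1%:R else 2^-1.

Lemma Pstar_bounds :
  [/\ 0 < Pstar, Pstar <= 2^-1 & Pstar * n.+1%:R <= 4 * K.+1%:R].
Proof.
have n0 : 0 < n.+1%:R :> R by rewrite ltr0n.
have K0 : 0 < K.+1%:R :> R by rewrite ltr0n.
rewrite /Pstar; case: ifP => [|/negbT]; rewrite -(ler_nat R) natrM -?ltNge => h.
  by rewrite divr_gt0 ?mulr_gt0 // ler_pdivrMr // mulfVK ?gt_eqF //; split => //; lra.
by split => //; lra.
Qed.

Lemma Pstar_ge0_lt1 : 0 <= Pstar < 1.
Proof.
have [P0 Ph _] := Pstar_bounds.
by rewrite (ltW P0) (le_lt_trans Ph) // invf_lt1 ?ltr1n.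
Qed.

Lemma bern_tail_Pstar_ge_half d : (K <= n./2)%N -> (d <= K)%N ->
  2^-1 <= \sum_(d.+1 <= j < n.+2) bern n.+1 j Pstar.
Proof.
rewrite geq_half_double => K2n dK; have /andP[P0 P1] := Pstar_ge0_lt1.
have Kn : (K <= n)%N by rewrite (leq_trans _ K2n) // -addnn leq_addr.
apply: bern_tail_ge_half; first exact: leq_trans dK (leqW Kn).
have [small|/negbTE large] := boolP (8 * K.+1 <= n.+1)%N; last first.
  rewrite /Pstar large; apply: bern_half_head_le_tail.
  by rewrite ltnS (leq_trans _ K2n) ?leq_double.
have PN : Pstar * n.+1%:R = 4 * K.+1%:R by rewrite /Pstar small mulfVK ?pnatr_eq0.
apply: (bern_head_le_tail (p := Pstar) _ _ _ dK); [by rewrite P0 ltW|by []|].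
move=> j jK; have jn := leq_trans jK Kn.
apply: bern_double; [by rewrite P0 | by rewrite ltnS |].
exact: bern_doubling_ratio P0 PN jK (leqW jn).
Qed.

Lemma SenS_le_SenN_Pstar (x y : cube n) : (K <= n./2)%N ->
  SenS R n K x y <= 8 * SenN R n Pstar x y.
Proof.
move=> Kn; have [P0 _ PN] := Pstar_bounds.
have PN0 : 0 < Pstar * n.+1%:R by rewrite mulr_gt0 ?ltr0n.
rewrite SenS_hamming SenN_hamming // invfM.
set T := \sum_(_ <= _ < _) _; set c := ('C(n, _)%:R)^-1.
set v := (Pstar * n.+1%:R)^-1.
have c0 : 0 < c by rewrite invr_gt0 lt0r bin_hamming_neq0 ler0n.
have vc0 : 0 < v * c by rewrite mulr_gt0 // invr_gt0.
case: ifP => dK; last first.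
  have /andP[P0' P1] := Pstar_ge0_lt1.
  have T0 : 0 <= T by rewrite /T sumr_ge0 // => j _; rewrite bern_ge0 // P0' ltW.
  by rewrite mulr_ge0 // mulr_ge0 // ltW.
have T2 : 2^-1 <= T := bern_tail_Pstar_ge_half Kn dK.
have kv : K.+1%:R^-1 <= 4 * v.
  by rewrite ler_pdivlMr // mulrC ler_pdivrMr ?ltr0n.
apply: le_trans (ler_wpM2r (ltW c0) kv) _.
apply: le_trans (ler_wpM2l (ler0n _ 8) (ler_wpM2l (ltW vc0) T2)).
by rewrite [leRHS](_ : _ = 4 * v * c) //; field.
Qed.

End DiracPoint.

Local Open Scope classical_set_scope.

Theorem lemma5 (R : realType) :
  exists C : R, 0 < C /\
  forall n : nat, (0 < n)%N ->
  forall K : nat, (K <= n./2)%N ->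
  exists mu : probability (measurableTypeR R) R,
    mu `[0%R, (2^-1)%R] = 1%E /\
    forall x y : cube n,
      ((SenS R n K x y)%:E <=
        C%:E * \int[mu]_(P in `[0%R, (2^-1)%R]) (SenN R n P x y)%:E)%E.
Proof.
exists 8; split=> // n _ K Kn.
have [P0 Ph _] := Pstar_bounds R n K.
have PI : `[0, 2^-1] (Pstar R n K) by rewrite /= in_itv /= (ltW P0) Ph.
exists (@dirac _ (measurableTypeR R) (Pstar R n K) R).
split=> [|x y]; first by rewrite /= diracE mem_set.
rewrite integral_dirac //; last by apply/measurable_EFinP; exact: measurable_SenN.
by rewrite diracE mem_set // mul1e lee_fin SenS_le_SenN_Pstar.
Qed.
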